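(* Let ${\bf D}$ be an $L\times N$ complex matrix with $L=Rd$, $N=Md$, whose columns have unit Euclidean norm, partitioned into consecutive column-blocks ${\bf D}[1],\dots,{\bf D}[M]$ of size $L\times d$, and assume ${\bf D}{\bf g}\neq{\bf 0}$ for every nonzero block $2k$-sparse ${\bf g}\in\mathbb{C}^N$. Let ${\bf x}_0\in\mathbb{C}^N$ be block $k$-sparse and ${\bf y}={\bf D}{\bf x}_0$. Let ${\bf D}_0$ be the $L\times (kd)$ matrix formed by the blocks ${\bf D}[\ell]$ corresponding to the nonzero blocks of ${\bf x}_0$ (so that the support has $k$ blocks), and $\overline{{\bf D}}_0$ the $L\times(N-kd)$ matrix formed by the remaining blocks of ${\bf D}$. If $$\rho_c({\bf D}_0^\dagger\overline{{\bf D}}_0)<1,$$ then both the BOMP algorithm and L-OPT recover ${\bf x}_0$ from ${\bf y}$. Moreover, in this case BOMP picks a correct new block (a block ${\bf D}[\ell]$ belonging to ${\bf D}_0$, not previously selected) in each step, and consequently converges (recovers ${\bf x}_0$) in at most $k$ steps.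
   Context: Vectors ${\bf x}\in\mathbb{C}^N$, $N=Md$, are viewed as concatenations of consecutive length-$d$ blocks ${\bf x}[1],\dots,{\bf x}[M]$; ${\bf x}$ is block $k$-sparse if $\|{\bf x}[\ell]\|_2>0$ for at most $k$ indices $\ell$. $\rho(\cdot)$ is the spectral norm and ${\bf A}^\dagger$ the Moore–Penrose pseudo-inverse. For a matrix ${\bf A}$ whose row and column numbers are multiples of $d$, with $(\ell,r)$th $d\times d$ block ${\bf A}[\ell,r]$, $\rho_c({\bf A})=\max_r\sum_\ell\rho({\bf A}[\ell,r])$. L-OPT: solve $\min_{\bf x}\sum_{\ell=1}^M\|{\bf x}[\ell]\|_2$ subject to ${\bf y}={\bf D}{\bf x}$; recovery means ${\bf x}_0$ is the unique minimizer. BOMP: initialize ${\bf r}_0={\bf y}$ and the selected index set $\mathcal I=\emptyset$. At stage $\ell\ge1$ choose $i_\ell=\arg\max_i\|{\bf D}^H[i]{\bf r}_{\ell-1}\|_2$, add $i_\ell$ to $\mathcal I$, compute coefficients ${\bf x}_\ell[i]$, $i\in\mathcal I$, minimizing $\|{\bf y}-\sum_{i\in\mathcal I}{\bf D}[i]{\bf x}_\ell[i]\|_2$, and set ${\bf r}_\ell={\bf y}-\sum_{i\in\mathcal I}{\bf D}[i]{\bf x}_\ell[i]$. Recovery means the resulting coefficient vector (zero on unselected blocks) equals ${\bf x}_0$. *)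

From HB Require Import structures.
From mathcomp Require Import all_boot all_order all_algebra.
From mathcomp Require Import classical_sets boolp reals.
From mathcomp Require Import complex.
From mathcomp Require Import zify.

Set Implicit Arguments.
Unset Strict Implicit.
Unset Printing Implicit Defensive.

Import Order.TTheory GRing.Theory Num.Theory.
Local Open Scope ring_scope.

Lemma bidx_proof (p d : nat) (l : 'I_p) (r : 'I_d) : (l * d + r < p * d)%N.
Proof.
have hl := ltn_ord l; have hr := ltn_ord r.
have : (l.+1 * d <= p * d)%N by rewrite leq_mul2r hl orbT.
rewrite mulSn; lia.
Qed.

(* the r-th entry (0-based) of the l-th block (0-based) *)
Definition bidx (p d : nat) (l : 'I_p) (r : 'I_d) : 'I_(p * d) :=
  Ordinal (bidx_proof l r).

Lemma bdiv_proof (p d : nat) (j : 'I_(p * d)) : (j %/ d < p)%N.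
Proof.
have : (nat_of_ord j < p * d)%N := ltn_ord j.
move: (nat_of_ord j) => n; clear j.
by case: d => [|d]; [rewrite muln0 | rewrite ltn_divLR].
Qed.

Lemma bmod_proof (p d : nat) (j : 'I_(p * d)) : (j %% d < d)%N.
Proof.
have : (nat_of_ord j < p * d)%N := ltn_ord j.
move: (nat_of_ord j) => n; clear j.
by case: d => [|d]; [rewrite muln0 | rewrite ltn_pmod].
Qed.

Definition bdiv (p d : nat) (j : 'I_(p * d)) : 'I_p := Ordinal (bdiv_proof j).
Definition bmod (p d : nat) (j : 'I_(p * d)) : 'I_d := Ordinal (bmod_proof j).

Section Defs.
Variable R : realType.
Local Notation C := (R[i]).

Definition enorm (n : nat) (v : 'cV[C]_n) : R :=
  Num.sqrt (\sum_(i < n) (Normc.normc (v i 0)) ^+ 2).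

Definition adjmx (m n : nat) (A : 'M[C]_(m, n)) : 'M[C]_(n, m) :=
  (map_mx (@conjc R) A)^T.

Definition rho (m n : nat) (A : 'M[C]_(m, n)) : R :=
  sup [set t : R | exists v : 'cV[C]_n, enorm v <= 1 /\ t = enorm (A *m v)].

(* Moore--Penrose pseudo-inverse: the (unique) X satisfying the four Penrose equations *)
Definition penrose (m n : nat) (A : 'M[C]_(m, n)) (X : 'M[C]_(n, m)) : Prop :=
  [/\ A *m X *m A = A, X *m A *m X = X,
      adjmx (A *m X) = A *m X & adjmx (X *m A) = X *m A].

Definition pinv (m n : nat) (A : 'M[C]_(m, n)) : 'M[C]_(n, m) :=
  xget 0 [set X | penrose A X].

Definition blk (M d : nat) (x : 'cV[C]_(M * d)) (l : 'I_M) : 'cV[C]_d :=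
  \col_(r < d) x (bidx l r) 0.

Definition Dblk (L M d : nat) (D : 'M[C]_(L, M * d)) (l : 'I_M) : 'M[C]_(L, d) :=
  \matrix_(i < L, r < d) D i (bidx l r).

Definition subblk (p q d : nat) (A : 'M[C]_(p * d, q * d)) (l : 'I_p) (r : 'I_q)
  : 'M[C]_d :=
  \matrix_(a < d, b < d) A (bidx l a) (bidx r b).

Definition rho_c (p q d : nat) (A : 'M[C]_(p * d, q * d)) : R :=
  \big[Num.max/0]_(r < q) \sum_(l < p) rho (subblk A l r).

Definition bsupp (M d : nat) (x : 'cV[C]_(M * d)) : {set 'I_M} :=
  [set l | blk x l != 0].

Definition block_sparse (M d k : nat) (x : 'cV[C]_(M * d)) : Prop :=
  (#|bsupp x| <= k)%N.

(* the matrix formed by the column blocks D[l], l in S, in increasing order of l *)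
Definition colblk (L M d : nat) (D : 'M[C]_(L, M * d)) (S : {set 'I_M})
  : 'M[C]_(L, #|S| * d) :=
  \matrix_(i < L, j < #|S| * d) D i (bidx (enum_val (bdiv j)) (bmod j)).

Definition l21 (M d : nat) (x : 'cV[C]_(M * d)) : R :=
  \sum_(l < M) enorm (blk x l).

Definition LOPT_recovers (L M d : nat) (D : 'M[C]_(L, M * d)) (y : 'cV[C]_L)
  (x0 : 'cV[C]_(M * d)) : Prop :=
  D *m x0 = y /\ (forall x : 'cV[C]_(M * d), D *m x = y -> x <> x0 -> l21 x0 < l21 x).

Definition supported_on (M d : nat) (I : {set 'I_M}) (x : 'cV[C]_(M * d)) : Prop :=
  forall l, l \notin I -> blk x l = 0.

Definition ls_sol (L M d : nat) (D : 'M[C]_(L, M * d)) (y : 'cV[C]_L)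
  (I : {set 'I_M}) (x : 'cV[C]_(M * d)) : Prop :=
  supported_on I x /\
  (forall z : 'cV[C]_(M * d), supported_on I z -> enorm (y - D *m x) <= enorm (y - D *m z)).

(* A run of t stages of BOMP (all admissible tie-breakings allowed).
   sel l  = index i_(l+1) selected at stage l+1 (0-based list of selections),
   xs l   = coefficient vector x_l after l stages (zero on unselected blocks), xs 0 = 0,
   so the residual after l stages is r_l = y - D xs l (r_0 = y). *)
Definition bomp_run (L M d : nat) (D : 'M[C]_(L, M * d)) (y : 'cV[C]_L)
  (sel : nat -> 'I_M) (xs : nat -> 'cV[C]_(M * d)) (t : nat) : Prop :=
  xs 0%N = 0 /\
  forall l : nat, (l < t)%N ->
    (forall i : 'I_M, enorm (adjmx (Dblk D i) *m (y - D *m xs l))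
                      <= enorm (adjmx (Dblk D (sel l)) *m (y - D *m xs l)))
    /\ ls_sol D y [set sel (nat_of_ord j) | j : 'I_l.+1] (xs l.+1).

End Defs.

From HB Require Import structures.
From mathcomp Require Import all_boot all_order all_algebra.
From mathcomp Require Import classical_sets boolp reals.
From mathcomp Require Import complex.
From mathcomp Require Import ring lra.

Set Implicit Arguments.
Unset Strict Implicit.
Unset Printing Implicit Defensive.

Import Order.TTheory GRing.Theory Num.Theory.
Local Open Scope ring_scope.

(* Let [S] be the block support of [x0], [D0 = D_S] (injective by the spark hypothesis) and
   [A = D0^dagger D_(~S)]. A null vector [h] of [D] satisfies [h_S = - A h_(~S)], so, as
   [rho_c A < 1], it has strictly less block l2/l1 mass on [S] than off [S]; this makes [x0]
   the unique L-OPT minimizer. A residual [r] in the range of [D0] satisfies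
   [r = (D0^dagger)^H D0^H r], so the correlation [|D[i]^H r|] of a block [i] off [S] is at most
   [rho_c A] times the largest correlation on [S]: every greedy BOMP step picks a block of [S].
   The least-squares residual is orthogonal to the blocks already selected, so each pick is
   new, and after [#|S|] steps the least-squares solution on [S] is [x0]. *)

Section InnerProduct.
Variable R : realType.
Local Notation C := (R[i]).
Local Open Scope complex_scope.

Definition dot n (u v : 'cV[C]_n) : C := \sum_i conjc (u i 0) * v i 0.

Lemma normr_normc (x : C) : `|x| = (Normc.normc x)%:C. Proof. by []. Qed.

Lemma normc_ge0 (x : C) : 0 <= Normc.normc x.
Proof. by rewrite -ler0c -normr_normc normr_ge0. Qed.

Lemma normc_conj (x : C) : Normc.normc (conjc x) = Normc.normc x.
Proof. by apply: (@complexI R); rewrite -!normr_normc normcJ. Qed.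

Lemma enorm_ge0 n (v : 'cV[C]_n) : 0 <= enorm v.
Proof. exact: sqrtr_ge0. Qed.

Lemma sqr_enorm n (v : 'cV[C]_n) : enorm v ^+ 2 = \sum_i Normc.normc (v i 0) ^+ 2.
Proof. by rewrite sqr_sqrtr // sumr_ge0 // => i _; rewrite sqr_ge0. Qed.

Lemma dotvv n (v : 'cV[C]_n) : dot v v = (enorm v ^+ 2)%:C.
Proof.
rewrite sqr_enorm rmorph_sum; apply: eq_bigr => i _.
by rewrite rmorphXn mulrC -sqr_normc.
Qed.

Lemma dotC n (u v : 'cV[C]_n) : dot v u = conjc (dot u v).
Proof.
rewrite /dot rmorph_sum; apply: eq_bigr => i _.
by rewrite rmorphM /= conjcK mulrC.
Qed.

Lemma dotDr n (u v w : 'cV[C]_n) : dot u (v + w) = dot u v + dot u w.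
Proof. by rewrite /dot -big_split; apply: eq_bigr => i _; rewrite mxE mulrDr. Qed.

Lemma dotZr n a (u v : 'cV[C]_n) : dot u (a *: v) = a * dot u v.
Proof. by rewrite /dot mulr_sumr; apply: eq_bigr => i _; rewrite mxE mulrCA. Qed.

Lemma dotNr n (u v : 'cV[C]_n) : dot u (- v) = - dot u v.
Proof. by rewrite -scaleN1r dotZr mulN1r. Qed.

Lemma dot0r n (u : 'cV[C]_n) : dot u 0 = 0.
Proof. by rewrite -(scale0r 0) dotZr mul0r. Qed.

Lemma dotDl n (u v w : 'cV[C]_n) : dot (v + w) u = dot v u + dot w u.
Proof. by rewrite dotC dotDr rmorphD /= -!dotC. Qed.

Lemma dotZl n a (u v : 'cV[C]_n) : dot (a *: v) u = conjc a * dot v u.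
Proof. by rewrite dotC dotZr rmorphM /= -dotC. Qed.

Lemma dotNl n (u v : 'cV[C]_n) : dot (- v) u = - dot v u.
Proof. by rewrite -scaleN1r dotZl rmorphN rmorph1 mulN1r. Qed.

Lemma adjmxM m n p (A : 'M[C]_(m, n)) (B : 'M[C]_(n, p)) :
  adjmx (A *m B) = adjmx B *m adjmx A.
Proof. by rewrite /adjmx map_mxM trmx_mul. Qed.

Lemma adjmxK m n (A : 'M[C]_(m, n)) : adjmx (adjmx A) = A.
Proof. by apply/matrixP => i j; rewrite !mxE conjcK. Qed.

Lemma adjmx1 n : adjmx (1%:M : 'M[C]_n) = 1%:M.
Proof. by apply/matrixP => i j; rewrite !mxE conjc_nat eq_sym. Qed.

Lemma adjmx_inv n (A : 'M[C]_n) : adjmx (invmx A) = invmx (adjmx A).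
Proof. by rewrite /adjmx map_invmx trmx_inv. Qed.

Lemma dot_adjmxl m n (A : 'M[C]_(m, n)) (u : 'cV[C]_m) (v : 'cV[C]_n) :
  dot (adjmx A *m u) v = dot u (A *m v).
Proof.
have dotE k (a b : 'cV[C]_k) : dot a b = (adjmx a *m b) 0 0.
  by rewrite !mxE; apply: eq_bigr => i _; rewrite !mxE.
by rewrite !dotE adjmxM adjmxK mulmxA.
Qed.

Lemma enorm0 n : enorm (0 : 'cV[C]_n) = 0.
Proof. by rewrite /enorm big1 ?sqrtr0 // => i _; rewrite mxE Normc.normc0 expr0n. Qed.

Lemma enorm0_eq0 n (v : 'cV[C]_n) : enorm v = 0 -> v = 0.
Proof.
move=> v0; have : enorm v ^+ 2 = 0 by rewrite v0 expr0n.
rewrite sqr_enorm => /eqP; rewrite psumr_eq0 => [/allP vi0|i _]; last exact: sqr_ge0.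
apply/matrixP => i j; rewrite (ord1 j) mxE.
by have := vi0 i (mem_index_enum _); rewrite sqrf_eq0 => /eqP/Normc.eq0_normc.
Qed.

Lemma enorm_gt0 n (v : 'cV[C]_n) : (0 < enorm v) = (v != 0).
Proof.
rewrite lt_def enorm_ge0 andbT; congr negb.
by apply/eqP/eqP => [/enorm0_eq0|->] //; rewrite enorm0.
Qed.

Lemma enormZ n a (v : 'cV[C]_n) : enorm (a *: v) = Normc.normc a * enorm v.
Proof.
rewrite -[Normc.normc a]ger0_norm ?normc_ge0 // -sqrtr_sqr /enorm.
rewrite -sqrtrM ?sqr_ge0 // mulr_sumr; congr Num.sqrt; apply: eq_bigr => i _.
by rewrite mxE Normc.normcM exprMn.
Qed.

Lemma enormN n (v : 'cV[C]_n) : enorm (- v) = enorm v.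
Proof.
rewrite -scaleN1r enormZ.
suff -> : Normc.normc (-1 : C) = 1 by rewrite mul1r.
by apply: (@complexI R); rewrite -normr_normc normrN1.
Qed.

(* Cauchy-Schwarz: expand the squared norm of [dot v v *: u - dot v u *: v]. *)
Lemma normc_dot_le n (u v : 'cV[C]_n) : Normc.normc (dot u v) <= enorm u * enorm v.
Proof.
have [->|nv0] := eqVneq v 0; first by rewrite dot0r Normc.normc0 enorm0 mulr0.
have ev : 0 < enorm v by rewrite enorm_gt0.
set a := dot v v; set b := dot v u.
have ha : conjc a = a by rewrite /a dotvv conjc_real.
have huv : dot u v = conjc b by rewrite /b dotC.
have bb : b * conjc b = (Normc.normc b ^+ 2)%:C by rewrite -sqr_normc normr_normc rmorphXn.
have expand : dot (a *: u - b *: v) (a *: u - b *: v) = a * (a * dot u u - b * conjc b).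
  rewrite !(dotDl, dotDr, dotNl, dotNr, dotZl, dotZr) ha -huv -/b -/a; ring.
have : 0 <= a * (a * dot u u - b * conjc b) by rewrite -expand dotvv ler0c sqr_ge0.
rewrite bb /a !dotvv -!rmorphM -rmorphB -rmorphM ler0c.
rewrite pmulr_rge0 ?exprn_gt0 // subr_ge0 => hle.
rewrite huv normc_conj -(@ler_sqr R) ?nnegrE ?normc_ge0 ?mulr_ge0 ?enorm_ge0 //.
by rewrite exprMn mulrC.
Qed.

Lemma ler_enormD n (u v : 'cV[C]_n) : enorm (u + v) <= enorm u + enorm v.
Proof.
set z := dot u v.
have sqrD : enorm (u + v) ^+ 2 = enorm u ^+ 2 + enorm v ^+ 2 + 2 * complex.Re z.
  apply: (@complexI R); rewrite -dotvv dotDl !dotDr [dot v u]dotC -/z !dotvv.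
  rewrite !rmorphD /=.
  have -> : (2 * complex.Re z)%:C = z + conjc z by rewrite addcJ rmorphM rmorph_nat.
  ring.
have Rez : complex.Re z <= enorm u * enorm v.
  apply: le_trans (normc_dot_le u v); apply: le_trans (ler_norm _) _.
  by rewrite -lecR; exact: normc_ge_Re.
rewrite -(@ler_sqr R) ?nnegrE ?addr_ge0 ?enorm_ge0 // sqrD sqrrD -mulr_natl; lra.
Qed.

Lemma ler_enorm_sum n (I : Type) (r : seq I) (P : pred I) (F : I -> 'cV[C]_n) :
  enorm (\sum_(i <- r | P i) F i) <= \sum_(i <- r | P i) enorm (F i).
Proof.
elim/big_rec2: _ => [|i y1 y2 _ IH]; first by rewrite enorm0.
by apply: le_trans (ler_enormD _ _) _; rewrite lerD2l.
Qed.

Lemma lerB_enormD n (u v : 'cV[C]_n) : enorm u - enorm v <= enorm (u + v).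
Proof. by have := ler_enormD (u + v) (- v); rewrite addrK enormN; lra. Qed.

Lemma sqr_enorm_subZ n (r v : 'cV[C]_n) (t a : R) : dot r v = a%:C ->
  enorm (r - t%:C *: v) ^+ 2 = enorm r ^+ 2 - 2 * (t * a) + t * t * enorm v ^+ 2.
Proof.
move=> drv; have dvr : dot v r = a%:C by rewrite dotC drv conjc_real.
apply: (@complexI R); rewrite -dotvv !(dotDl, dotDr, dotNl, dotNr, dotZl, dotZr).
rewrite drv dvr conjc_real !dotvv.
by rewrite !rmorphD !rmorphN !rmorphM !rmorph_nat /=; ring.
Qed.

Lemma normc_le_enorm n (v : 'cV[C]_n) i : Normc.normc (v i 0) <= enorm v.
Proof.
rewrite -(@ler_sqr R) ?nnegrE ?normc_ge0 ?enorm_ge0 // sqr_enorm.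
by rewrite (bigD1 i) //= lerDl sumr_ge0 // => j _; exact: sqr_ge0.
Qed.

Lemma ler_normc_sum (I : Type) (r : seq I) (P : pred I) (F : I -> C) :
  Normc.normc (\sum_(i <- r | P i) F i) <= \sum_(i <- r | P i) Normc.normc (F i).
Proof.
elim/big_rec2: _ => [|i y1 y2 _ IH]; first by rewrite Normc.normc0.
by apply: le_trans (le_normcD _ _) _; rewrite lerD2l.
Qed.

Lemma enorm_le_sum_normc n (v : 'cV[C]_n) : enorm v <= \sum_i Normc.normc (v i 0).
Proof.
have sum_sqr_le (r : seq 'I_n) : \sum_(i <- r) Normc.normc (v i 0) ^+ 2
                                 <= (\sum_(i <- r) Normc.normc (v i 0)) ^+ 2.
  elim: r => [|a r IH]; first by rewrite !big_nil expr0n.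
  rewrite !big_cons sqrrD.
  have : 0 <= Normc.normc (v a 0) * \sum_(j <- r) Normc.normc (v j 0).
    by rewrite mulr_ge0 ?normc_ge0 ?sumr_ge0 // => j _; exact: normc_ge0.
  lra.
rewrite -(@ler_sqr R) ?nnegrE ?enorm_ge0 ?sumr_ge0 // => [|i _]; last exact: normc_ge0.
by rewrite sqr_enorm sum_sqr_le.
Qed.

End InnerProduct.

Section SpectralNorm.
Variable R : realType.
Local Notation C := (R[i]).
Local Open Scope classical_set_scope.
Local Open Scope complex_scope.

Lemma rho_bounded m n (A : 'M[C]_(m, n)) :
  has_ubound [set t : R | exists v : 'cV[C]_n, enorm v <= 1 /\ t = enorm (A *m v)].
Proof.
exists (\sum_(i < m) \sum_(j < n) Normc.normc (A i j)) => t [v [v1 ->]].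
apply: le_trans (enorm_le_sum_normc _) _; apply: ler_sum => i _.
rewrite mxE; apply: le_trans (ler_normc_sum _ _ _) _; apply: ler_sum => j _.
rewrite Normc.normcM -[X in _ <= X]mulr1 ler_wpM2l ?normc_ge0 //.
exact: le_trans (normc_le_enorm _ _) v1.
Qed.

Lemma rho_ge_unit m n (A : 'M[C]_(m, n)) v : enorm v <= 1 -> enorm (A *m v) <= rho A.
Proof. by move=> v1; apply: (ub_le_sup (rho_bounded A)); exists v. Qed.

Lemma rho_ge0 m n (A : 'M[C]_(m, n)) : 0 <= rho A.
Proof. by have := @rho_ge_unit _ _ A 0; rewrite mulmx0 !enorm0; apply; exact: ler01. Qed.

Lemma enorm_mulmx_le m n (A : 'M[C]_(m, n)) v : enorm (A *m v) <= rho A * enorm v.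
Proof.
have [->|nv0] := eqVneq v 0; first by rewrite mulmx0 !enorm0 mulr0.
have ev : 0 < enorm v by rewrite enorm_gt0.
set c : R := (enorm v)^-1.
have nc : Normc.normc c%:C = c.
  by rewrite /Normc.normc /= expr0n addr0 sqrtr_sqr ger0_norm // invr_ge0 enorm_ge0.
have := @rho_ge_unit _ _ A (c%:C *: v).
rewrite enormZ nc mulVf ?gt_eqF // lexx -scalemxAr enormZ nc => /(_ isT).
by rewrite ler_pdivrMl // mulrC.
Qed.

Lemma enorm_adjmx_mul_le m n (A : 'M[C]_(m, n)) u :
  enorm (adjmx A *m u) <= rho A * enorm u.
Proof.
set w := adjmx A *m u.
have [w0|nw0] := eqVneq w 0; first by rewrite w0 enorm0 mulr_ge0 ?rho_ge0 ?enorm_ge0.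
have ew : 0 < enorm w by rewrite enorm_gt0.
have sqrw : (enorm w ^+ 2)%:C = dot u (A *m w) by rewrite -dotvv dot_adjmxl.
have : enorm w ^+ 2 <= enorm u * (rho A * enorm w).
  apply: le_trans (ler_wpM2l (enorm_ge0 _) (enorm_mulmx_le A w)).
  apply: le_trans (normc_dot_le u (A *m w)).
  rewrite -sqrw -lecR; apply: le_trans _ (normc_ge_Re _).
  by rewrite lecR /= ler_norm.
by rewrite expr2 mulrA (mulrC (enorm u)) ler_pM2r.
Qed.

Lemma sum_rho_subblk_le p q d (A : 'M[C]_(p * d, q * d)) r :
  \sum_(l < p) rho (subblk A l r) <= rho_c A.
Proof. exact: (le_bigmax _ (fun r => \sum_(l < p) rho (subblk A l r))). Qed.

End SpectralNorm.

Section Blocks.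
Variable R : realType.
Local Notation C := (R[i]).

Lemma bdiv_bidx p d (l : 'I_p) (r : 'I_d) : bdiv (bidx l r) = l.
Proof.
apply: val_inj => /=; have hr := ltn_ord r.
by rewrite divnMDl ?(leq_ltn_trans _ hr) // divn_small // addn0.
Qed.

Lemma bmod_bidx p d (l : 'I_p) (r : 'I_d) : bmod (bidx l r) = r.
Proof. by apply: val_inj => /=; rewrite modnMDl modn_small. Qed.

Lemma bidxK p d (j : 'I_(p * d)) : bidx (bdiv j) (bmod j) = j.
Proof. by apply: val_inj => /=; rewrite -divn_eq. Qed.

Lemma big_bidx p d (F : 'I_(p * d) -> C) :
  \sum_(j < p * d) F j = \sum_(l < p) \sum_(r < d) F (bidx l r).
Proof.
rewrite pair_big /= (reindex (fun q : 'I_p * 'I_d => bidx q.1 q.2)) //.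
exists (fun j => (bdiv j, bmod j)) => [[l r] _|j _] /=; last by rewrite bidxK.
by rewrite bdiv_bidx bmod_bidx.
Qed.

Lemma blk_inj M d (x y : 'cV[C]_(M * d)) : (forall l, blk x l = blk y l) -> x = y.
Proof.
move=> xy; apply/matrixP => j a; rewrite (ord1 a) -(bidxK j).
by have /matrixP/(_ (bmod j) 0) := xy (bdiv j); rewrite !mxE.
Qed.

Lemma blk0 M d l : blk (0 : 'cV[C]_(M * d)) l = 0.
Proof. by apply/matrixP => i j; rewrite !mxE. Qed.

Lemma blkD M d (x y : 'cV[C]_(M * d)) l : blk (x + y) l = blk x l + blk y l.
Proof. by apply/matrixP => i j; rewrite !mxE. Qed.

Lemma blkN M d (x : 'cV[C]_(M * d)) l : blk (- x) l = - blk x l.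
Proof. by apply/matrixP => i j; rewrite !mxE. Qed.

Lemma blkB M d (x y : 'cV[C]_(M * d)) l : blk (x - y) l = blk x l - blk y l.
Proof. by apply/matrixP => i j; rewrite !mxE. Qed.

Lemma blkZ M d a (x : 'cV[C]_(M * d)) l : blk (a *: x) l = a *: blk x l.
Proof. by apply/matrixP => i j; rewrite !mxE. Qed.

Lemma blk_sum M d (I : Type) (r : seq I) (P : pred I) (F : I -> 'cV[C]_(M * d)) l :
  blk (\sum_(i <- r | P i) F i) l = \sum_(i <- r | P i) blk (F i) l.
Proof. by elim/big_rec2: _ => [|i y1 y2 _ <-]; rewrite ?blk0 ?blkD. Qed.

Lemma blk_mulmx p q d (A : 'M[C]_(p * d, q * d)) (w : 'cV[C]_(q * d)) l :
  blk (A *m w) l = \sum_(r < q) subblk A l r *m blk w r.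
Proof.
apply/matrixP => a b; rewrite (ord1 b) !mxE summxE big_bidx.
by apply: eq_bigr => r _; rewrite !mxE; apply: eq_bigr => c _; rewrite !mxE.
Qed.

Lemma subblk_adjmx p q d (A : 'M[C]_(p * d, q * d)) l r :
  subblk (adjmx A) r l = adjmx (subblk A l r).
Proof. by apply/matrixP => a b; rewrite !mxE. Qed.

Lemma blk_notin_bsupp M d (x : 'cV[C]_(M * d)) l : l \notin bsupp x -> blk x l = 0.
Proof. by rewrite inE negbK => /eqP. Qed.

Lemma card_bsupp_le M d (T : {set 'I_M}) (x : 'cV[C]_(M * d)) :
  supported_on T x -> (#|bsupp x| <= #|T|)%N.
Proof.
move=> xT; apply/subset_leq_card/fintype.subsetP => l; rewrite inE; apply: contraR.
by move/xT ->.
Qed.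

Definition restr M d (T : {set 'I_M}) (x : 'cV[C]_(M * d)) : 'cV[C]_(#|T| * d) :=
  \col_(j < #|T| * d) x (bidx (enum_val (bdiv j)) (bmod j)) 0.

Lemma blk_restr M d (T : {set 'I_M}) (x : 'cV[C]_(M * d)) t :
  blk (restr T x) t = blk x (enum_val t).
Proof. by apply/matrixP => a b; rewrite !mxE bdiv_bidx bmod_bidx. Qed.

Lemma restr_eq0 M d (T : {set 'I_M}) (x : 'cV[C]_(M * d)) :
  (forall l, l \in T -> blk x l = 0) -> restr T x = 0.
Proof. by move=> xT; apply: blk_inj => t; rewrite blk_restr blk0 xT ?enum_valP. Qed.

Lemma restr_split_eq0 M d (T : {set 'I_M}) (x : 'cV[C]_(M * d)) :
  restr T x = 0 -> restr (~: T) x = 0 -> x = 0.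
Proof.
move=> xT xTC; apply: blk_inj => l; rewrite blk0.
have [lT|lT] := boolP (l \in T); last rewrite -finset.in_setC in lT.
  by rewrite -(enum_rankK_in lT lT) -blk_restr xT blk0.
by rewrite -(enum_rankK_in lT lT) -blk_restr xTC blk0.
Qed.

Lemma mulmx_colblk_split L M d (D : 'M[C]_(L, M * d)) (T : {set 'I_M}) x :
  D *m x = colblk D T *m restr T x + colblk D (~: T) *m restr (~: T) x.
Proof.
apply/matrixP => i a; rewrite (ord1 a) !mxE !big_bidx (bigID (mem T)) /=.
rewrite [X in _ + X](eq_bigl (fun l => l \in ~: T)) => [|l]; last by rewrite !inE.
by congr (_ + _); rewrite big_enum_val; apply: eq_bigr => t _; apply: eq_bigr => r _;
  rewrite !mxE bdiv_bidx bmod_bidx.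
Qed.

Lemma mulmx_supported L M d (D : 'M[C]_(L, M * d)) (T : {set 'I_M}) x :
  supported_on T x -> D *m x = colblk D T *m restr T x.
Proof.
move=> xT; rewrite (mulmx_colblk_split D T) [restr (~: T) x]restr_eq0 ?mulmx0 ?addr0 //.
by move=> l; rewrite finset.in_setC; exact: xT.
Qed.

Lemma l21_split M d (T : {set 'I_M}) (x : 'cV[C]_(M * d)) :
  l21 x = \sum_(t < #|T|) enorm (blk x (enum_val t)) +
          \sum_(t < #|~: T|) enorm (blk x (enum_val t)).
Proof.
rewrite /l21 (bigID (mem T)) /= big_enum_val; congr (_ + _).
rewrite (eq_bigl (fun l => l \in ~: T)); last by move=> l; rewrite !inE.
by rewrite big_enum_val.
Qed.

Definition embed_blk M d (i : 'I_M) (g : 'cV[C]_d) : 'cV[C]_(M * d) :=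
  \col_j (if bdiv j == i then g (bmod j) 0 else 0).

Lemma blk_embed M d (i : 'I_M) (g : 'cV[C]_d) l :
  blk (embed_blk i g) l = if l == i then g else 0.
Proof.
apply/matrixP => a b; rewrite (ord1 b) !mxE bdiv_bidx bmod_bidx.
by case: eqP; rewrite ?mxE.
Qed.

Lemma mulmx_embed_blk L M d (D : 'M[C]_(L, M * d)) i g :
  D *m embed_blk i g = Dblk D i *m g.
Proof.
apply/matrixP => a b; rewrite (ord1 b) !mxE big_bidx (bigD1 i) //= [X in _ + X]big1 ?addr0.
  by apply: eq_bigr => r _; rewrite !mxE bdiv_bidx bmod_bidx eqxx.
by move=> l /negPf nl; rewrite big1 // => r _; rewrite !mxE bdiv_bidx nl mulr0.
Qed.

Definition extend M d (T : {set 'I_M}) (v : 'cV[C]_(#|T| * d)) : 'cV[C]_(M * d) :=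
  \sum_(t < #|T|) embed_blk (enum_val t) (blk v t).

Lemma extend_supported M d (T : {set 'I_M}) (v : 'cV[C]_(#|T| * d)) :
  supported_on T (extend v).
Proof.
move=> l lT; rewrite blk_sum big1 // => t _; rewrite blk_embed.
by case: eqP => // el; rewrite el enum_valP in lT.
Qed.

Lemma restr_extend M d (T : {set 'I_M}) (v : 'cV[C]_(#|T| * d)) : restr T (extend v) = v.
Proof.
apply: blk_inj => t; rewrite blk_restr blk_sum (bigD1 t) //= blk_embed eqxx.
by rewrite big1 ?addr0 // => t' t't; rewrite blk_embed eq_sym (inj_eq enum_val_inj) (negPf t't).
Qed.

Lemma blk_adjmx_colblk L M d (D : 'M[C]_(L, M * d)) (T : {set 'I_M}) (r : 'cV[C]_L) t :
  blk (adjmx (colblk D T) *m r) t = adjmx (Dblk D (enum_val t)) *m r.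
Proof.
apply/matrixP => a b; rewrite (ord1 b) !mxE; apply: eq_bigr => i _.
by rewrite !mxE bdiv_bidx bmod_bidx.
Qed.

End Blocks.

Section InjectiveMatrix.
Variables (F : fieldType) (m n : nat) (A : 'M[F]_(m, n)).
Hypothesis A_inj : forall v : 'cV[F]_n, A *m v = 0 -> v = 0.

Lemma row_free_trmx_inj : row_free A^T.
Proof.
apply: inj_row_free => v /(congr1 trmx); rewrite trmx_mul trmxK trmx0.
by move/A_inj/(congr1 trmx); rewrite trmxK trmx0.
Qed.

Lemma inj_mulmx_eq0 p (B : 'M[F]_(n, p)) : A *m B = 0 -> B = 0.
Proof.
move=> /(congr1 trmx); rewrite trmx_mul trmx0 => /eqP.
by rewrite (mulmx_free_eq0 _ row_free_trmx_inj) -trmx0 => /eqP/trmx_inj.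
Qed.

End InjectiveMatrix.

Lemma inj_unitmx (F : fieldType) n (A : 'M[F]_n) :
  (forall v : 'cV[F]_n, A *m v = 0 -> v = 0) -> A \in unitmx.
Proof. by move=> A_inj; rewrite -unitmx_tr -row_free_unit; exact: row_free_trmx_inj. Qed.

Section PseudoInverse.
Variables (R : realType) (m n : nat) (A : 'M[R[i]]_(m, n)).
Hypothesis A_inj : forall v : 'cV[R[i]]_n, A *m v = 0 -> v = 0.

(* For injective [A] the pseudo-inverse is [(A^H A)^-1 A^H]. *)
Lemma penrose_pinv : penrose A (pinv A).
Proof.
apply: (xgetPex 0); set G := adjmx A *m A.
have G_unit : G \in unitmx.
  apply: inj_unitmx => v Gv; apply: A_inj; apply: enorm0_eq0.
  have : dot (A *m v) (A *m v) = 0.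
    by rewrite -{1}[A]adjmxK dot_adjmxl mulmxA -/G Gv dot0r.
  by rewrite dotvv => /(congr1 (@complex.Re _)) /= /eqP; rewrite sqrf_eq0 => /eqP.
exists (invmx G *m adjmx A).
have XA : invmx G *m adjmx A *m A = 1%:M by rewrite -mulmxA mulVmx.
split.
- by rewrite -mulmxA XA mulmx1.
- by rewrite XA mul1mx.
- by rewrite !adjmxM adjmxK adjmx_inv /G adjmxM adjmxK mulmxA.
- by rewrite XA adjmx1.
Qed.

Lemma pinv_mulmx : pinv A *m A = 1%:M.
Proof.
case: penrose_pinv => AXA _ _ _; apply/eqP; rewrite -subr_eq0; apply/eqP.
by apply: (inj_mulmx_eq0 A_inj); rewrite mulmxBr mulmxA AXA mulmx1 subrr.
Qed.

Lemma adjmx_pinv_mul : adjmx (pinv A) *m adjmx A = A *m pinv A.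
Proof. by case: penrose_pinv => _ _ AX _; rewrite -adjmxM. Qed.

End PseudoInverse.

Section LeastSquares.
Variables (R : realType) (L M d : nat) (D : 'M[R[i]]_(L, M * d)).
Local Notation C := (R[i]).
Local Open Scope complex_scope.

Definition bcorr (r : 'cV[C]_L) (i : 'I_M) : R := enorm (adjmx (Dblk D i) *m r).

(* If [g := D[i]^H r] were nonzero, moving [x] by [t *: g] along block [i], with
   [t := |g|^2 / (|D[i] g|^2 + 1)], would shorten the residual [r]. *)
Lemma ls_sol_residual_orth (y : 'cV[C]_L) (T : {set 'I_M}) (x : 'cV[C]_(M * d)) i :
  ls_sol D y T x -> i \in T -> adjmx (Dblk D i) *m (y - D *m x) = 0.
Proof.
move=> [xT opt] iT; set r := y - D *m x; set g := adjmx (Dblk D i) *m r.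
apply/eqP; rewrite -[g == 0]negbK -enorm_gt0 -leNgt; set v := Dblk D i *m g.
set a := enorm g ^+ 2; set b := enorm v ^+ 2; set t := a / (b + 1).
have b_ge0 : 0 <= b by rewrite sqr_ge0.
have t_ge0 : 0 <= t by rewrite divr_ge0 ?sqr_ge0 ?addr_ge0.
have tb1 : t * (b + 1) = a by rewrite /t mulfVK // gt_eqF // ltr_wpDl.
have tb_le : t * b <= a by nra.
set z := x + t%:C *: embed_blk i g.
have zT : supported_on T z.
  move=> l lT; rewrite blkD blkZ blk_embed (xT l lT).
  by case: eqP => [el|_]; [rewrite el iT in lT | rewrite scaler0 addr0].
have rz : y - D *m z = r - t%:C *: v.
  by rewrite mulmxDr -scalemxAr mulmx_embed_blk opprD addrA.
have drv : dot r v = a%:C by rewrite -dot_adjmxl dotvv.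
have := opt z zT; rewrite rz -(@ler_sqr R) ?nnegrE ?enorm_ge0 // (sqr_enorm_subZ _ drv) -/b.
move=> descent; have ta_le0 : t * a <= 0 by nra.
have aa : a * a = t * a * (b + 1) by rewrite -tb1; ring.
have aa_le0 : a * a <= 0 by rewrite aa mulr_le0_ge0 // addr_ge0.
have a_le0 : a <= 0 by nra.
by have := enorm_ge0 g; move: a_le0; rewrite /a; nra.
Qed.

End LeastSquares.

Definition selected M (sel : nat -> 'I_M) (l : nat) : {set 'I_M} :=
  [set sel (nat_of_ord j) | j : 'I_l].

Lemma selected0 M (sel : nat -> 'I_M) : selected sel 0 = finset.set0.
Proof. by apply/setP => a; rewrite inE; apply/imsetP => -[[]]. Qed.

Lemma selectedS M (sel : nat -> 'I_M) l : selected sel l.+1 = sel l |: selected sel l.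
Proof.
apply/setP => a; rewrite in_setU1; apply/imsetP/orP => [[j _ ->]|[/eqP ->|/imsetP [j _ ->]]].
- case: (ltngtP j l) => [jl|lj|->]; first by right; apply/imsetP; exists (Ordinal jl).
    by have := ltn_ord j; rewrite ltnS leqNgt lj.
  by left.
- by exists ord_max.
- by exists (widen_ord (leqnSn l) j).
Qed.

Section ExactRecovery.
Variables (R : realType) (L M d : nat) (D : 'M[R[i]]_(L, M * d)).
Variable x0 : 'cV[R[i]]_(M * d).
Local Notation C := (R[i]).
Local Notation S := (bsupp x0).
Local Notation D0 := (colblk D S).
Local Notation A := (pinv D0 *m colblk D (~: S)).
Local Notation y := (D *m x0).
Local Notation corr := (bcorr D).

Hypothesis D0_inj : forall v : 'cV[C]_(#|S| * d), D0 *m v = 0 -> v = 0.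
Hypothesis erc : rho_c A < 1.

Lemma supported_mulmx_eq0 (g : 'cV[C]_(M * d)) : supported_on S g -> D *m g = 0 -> g = 0.
Proof.
move=> gS Dg; apply: (restr_split_eq0 (T := S)).
  by apply: D0_inj; rewrite -mulmx_supported.
by apply: restr_eq0 => l; rewrite finset.in_setC; exact: gS.
Qed.

(* [h_S = - A h_(~S)], so [rho_c A < 1] makes the block l2/l1 mass of [h] on [S] smaller. *)
Lemma null_space_property (h : 'cV[C]_(M * d)) : D *m h = 0 -> h != 0 ->
  \sum_(t < #|S|) enorm (blk (restr S h) t) <
  \sum_(t < #|~: S|) enorm (blk (restr (~: S) h) t).
Proof.
move=> Dh nh; set hS := restr S h; set hSC := restr (~: S) h.
have hSE : hS = - (A *m hSC).
  have /eqP : D0 *m hS + colblk D (~: S) *m hSC = 0 by rewrite -mulmx_colblk_split.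
  rewrite addr_eq0 => /eqP e.
  by rewrite -[hS]mul1mx -(pinv_mulmx D0_inj) -(mulmxA (pinv D0)) e mulmxN mulmxA.
set E := \sum_(t < #|~: S|) enorm (blk hSC t).
have E_gt0 : 0 < E.
  rewrite lt_def sumr_ge0 ?andbT => [|t _]; last exact: enorm_ge0.
  apply: contra nh; rewrite psumr_eq0 => [/allP E0|t _]; last exact: enorm_ge0.
  have hSC0 : hSC = 0.
    by apply: blk_inj => t; rewrite blk0; apply: enorm0_eq0; apply/eqP/E0/mem_index_enum.
  have hS0 : hS = 0 by rewrite hSE hSC0 mulmx0 oppr0.
  by apply/eqP; exact: restr_split_eq0 hS0 hSC0.
apply: (@le_lt_trans _ _ (rho_c A * E)); last by rewrite gtr_pMl.
apply: (@le_trans _ _ (\sum_(t < #|S|) \sum_(r < #|~: S|)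
                         rho (subblk A t r) * enorm (blk hSC r))).
  apply: ler_sum => t _; rewrite hSE blkN enormN blk_mulmx.
  apply: le_trans (ler_enorm_sum _ _ _) _; apply: ler_sum => r _.
  exact: enorm_mulmx_le.
rewrite exchange_big /= mulr_sumr; apply: ler_sum => r _.
by rewrite -mulr_suml ler_wpM2r ?enorm_ge0 ?sum_rho_subblk_le.
Qed.

Lemma lopt_recovers : LOPT_recovers D y x0.
Proof.
split=> // x Dx xx0; set h := x - x0.
have Dh : D *m h = 0 by rewrite mulmxBr Dx subrr.
have nh : h != 0 by rewrite subr_eq0; apply/eqP.
have xE : x = x0 + h by rewrite addrC subrK.
have x0SC (t : 'I_#|~: S|) : blk x0 (enum_val t) = 0.
  by apply: blk_notin_bsupp; rewrite -finset.in_setC enum_valP.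
have := null_space_property Dh nh.
rewrite (l21_split S x) (l21_split S x0).
rewrite [\sum_(t < #|~: S|) enorm (blk x0 _)]big1 ?addr0 => [|t _]; last by rewrite x0SC enorm0.
have -> : \sum_(t < #|~: S|) enorm (blk (restr (~: S) h) t) =
          \sum_(t < #|~: S|) enorm (blk x (enum_val t)).
  by apply: eq_bigr => t _; rewrite blk_restr xE blkD x0SC add0r.
have : \sum_(t < #|S|) enorm (blk x0 (enum_val t)) -
       \sum_(t < #|S|) enorm (blk (restr S h) t) <=
       \sum_(t < #|S|) enorm (blk x (enum_val t)).
  by rewrite -sumrB; apply: ler_sum => t _; rewrite blk_restr xE blkD lerB_enormD.
lra.
Qed.

(* Since [r = (D0^dagger)^H D0^H r], the matrix [A^H] carries the blocks of [D0^H r] to the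
   blocks off [S], shrinking the largest one by the factor [rho_c A < 1]. *)
Lemma supp_corr_dominates (z : 'cV[C]_(#|S| * d)) : (0 < #|S|)%N -> D0 *m z != 0 ->
  exists2 l, l \in S & 0 < corr (D0 *m z) l /\
    forall i, i \notin S -> corr (D0 *m z) i < corr (D0 *m z) l.
Proof.
move=> S_gt0 nz; set r := D0 *m z; set w := adjmx D0 *m r.
have rE : r = adjmx (pinv D0) *m w.
  rewrite /w mulmxA (adjmx_pinv_mul D0_inj) /r.
  by rewrite mulmxA -(mulmxA D0 (pinv D0) D0) (pinv_mulmx D0_inj) mulmx1.
have corrS t : corr r (enum_val t) = enorm (blk w t) by rewrite /bcorr -blk_adjmx_colblk.
have [tm _ tm_max] := @arg_maxP _ _ _ (Ordinal S_gt0) predT (fun t => enorm (blk w t)) isT.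
set m := enorm (blk w tm); have tmax t : enorm (blk w t) <= m := tm_max t isT.
have m_gt0 : 0 < m.
  rewrite lt_def enorm_ge0 andbT; apply: contra nz => /eqP m0.
  have w0 : w = 0.
    apply: blk_inj => t; rewrite blk0; apply: enorm0_eq0; apply/eqP.
    by rewrite eq_le enorm_ge0 andbT -m0 tmax.
  by rewrite -/r rE w0 mulmx0.
exists (enum_val tm); first exact: enum_valP.
split=> [|i iS]; first by rewrite corrS.
have iSC : i \in ~: S by rewrite finset.in_setC.
rewrite corrS /bcorr -(enum_rankK_in iSC iSC) -blk_adjmx_colblk rE mulmxA -adjmxM.
rewrite blk_mulmx; apply: le_lt_trans (ler_enorm_sum _ _ _) _.
apply: (@le_lt_trans _ _ (\sum_(t < #|S|) rho (subblk A t (enum_rank_in iSC i)) * m)).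
  apply: ler_sum => t _; rewrite subblk_adjmx.
  by apply: le_trans (enorm_adjmx_mul_le _ _) _; rewrite ler_wpM2l ?rho_ge0 ?tmax.
rewrite -mulr_suml; apply: (@le_lt_trans _ _ (rho_c A * m)); last by rewrite gtr_pMl.
by rewrite ler_wpM2r ?sum_rho_subblk_le // ltW.
Qed.

Lemma bomp_stage_correct (T : {set 'I_M}) (x : 'cV[C]_(M * d)) (i : 'I_M) :
  (#|T| < #|S|)%N -> T \subset S -> ls_sol D y T x ->
  (forall j, corr (y - D *m x) j <= corr (y - D *m x) i) -> i \in S /\ i \notin T.
Proof.
move=> TS TsubS ls imax; have [xT _] := ls; set g := x0 - x.
have gS : supported_on S g.
  move=> l lS; rewrite blkB blk_notin_bsupp // xT ?subr0 //.
  by apply: contra lS; exact: (fintype.subsetP TsubS).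
have rE : y - D *m x = D0 *m restr S g by rewrite -mulmxBr (mulmx_supported _ gS).
have r_neq0 : D0 *m restr S g != 0.
  apply/eqP => r0; have /eqP : g = 0.
    by apply: supported_mulmx_eq0; rewrite // (mulmx_supported _ gS) r0.
  rewrite /g subr_eq0 => /eqP x0x.
  by move: (card_bsupp_le xT); rewrite -x0x leqNgt TS.
have [l lS [l_pos ldom]] := supp_corr_dominates (leq_ltn_trans (leq0n _) TS) r_neq0.
split; first by apply: contraT => iS; have := ldom i iS; rewrite -rE ltNge imax.
apply/negP => iT; move: (imax l) l_pos; rewrite /bcorr (ls_sol_residual_orth ls iT).
by rewrite rE enorm0 ltNge => ->.
Qed.

Lemma ls_sol_supp_eq (x : 'cV[C]_(M * d)) : ls_sol D y S x -> x = x0.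
Proof.
move=> [xS opt]; have := opt x0 (fun l lS => blk_notin_bsupp lS).
rewrite subrr enorm0 => res_le0.
have /enorm0_eq0 : enorm (y - D *m x) = 0 by apply/eqP; rewrite eq_le res_le0 enorm_ge0.
rewrite -mulmxBr => Dg; apply/eqP; rewrite eq_sym -subr_eq0; apply/eqP.
by apply: supported_mulmx_eq0 Dg => l lS; rewrite blkB blk_notin_bsupp // xS ?subr0.
Qed.

Section BOMP.
Variables (sel : nat -> 'I_M) (xs : nat -> 'cV[C]_(M * d)).
Hypothesis run : bomp_run D y sel xs #|S|.

Lemma bomp_invariant l : (l <= #|S|)%N ->
  [/\ selected sel l \subset S, #|selected sel l| = l & ls_sol D y (selected sel l) (xs l)].
Proof.
elim: l => [_|l IH lS].
  have [xs0 _] := run; rewrite selected0 finset.sub0set cards0 xs0; split=> //.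
  split=> [l _|z z0]; first by rewrite blk0.
  suff -> : z = 0 by [].
  by apply: blk_inj => l; rewrite blk0 z0 // inE.
have [TS cardT ls] := IH (ltnW lS); have [imax ls'] := run.2 l lS.
have lt_S : (#|selected sel l| < #|S|)%N by rewrite cardT.
have [inS notin] := bomp_stage_correct lt_S TS ls imax.
rewrite selectedS; split=> //; last by rewrite -selectedS.
- by rewrite finset.subUset finset.sub1set inS.
- by rewrite cardsU1 notin cardT.
Qed.

Lemma bomp_run_correct :
  (forall l, (l < #|S|)%N -> sel l \in S /\ (forall j, (j < l)%N -> sel j != sel l))
  /\ xs #|S| = x0.
Proof.
split=> [l lS|].
  have [TS cardT ls] := bomp_invariant (ltnW lS).
  have lt_S : (#|selected sel l| < #|S|)%N by rewrite cardT.
  have [inS notin] := bomp_stage_correct lt_S TS ls (run.2 l lS).1.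
  split=> // j jl; apply: contraNneq notin => <-.
  by apply/imsetP; exists (Ordinal jl).
have [TS cardT ls] := bomp_invariant (leqnn _).
have selS : selected sel #|S| = S by apply/eqP; rewrite eqEcard TS cardT leqnn.
by move: ls; rewrite selS; exact: ls_sol_supp_eq.
Qed.

End BOMP.

End ExactRecovery.

Lemma colblk_inj (R : realType) L M d (D : 'M[R[i]]_(L, M * d)) (T : {set 'I_M}) k :
  (#|T| <= k)%N -> (forall g, g != 0 -> block_sparse k g -> D *m g != 0) ->
  forall v : 'cV[R[i]]_(#|T| * d), colblk D T *m v = 0 -> v = 0.
Proof.
move=> Tk D_inj v Dv; have vT := extend_supported v.
rewrite -(restr_extend v); suff -> : extend v = 0 by apply: restr_eq0 => l _; rewrite blk0.
apply/eqP; apply: contraT => nz; have := D_inj _ nz (leq_trans (card_bsupp_le vT) Tk).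
by rewrite (mulmx_supported _ vT) restr_extend Dv eqxx.
Qed.

Theorem theorem2 (R : realType) (P M d k : nat)
  (D : 'M[R[i]]_(P * d, M * d)) (x0 : 'cV[R[i]]_(M * d)) :
  (forall j : 'I_(M * d), enorm (col j D) = 1) ->
  (forall g : 'cV[R[i]]_(M * d), g != 0 -> block_sparse (2 * k) g -> D *m g != 0) ->
  block_sparse k x0 -> #|bsupp x0| = k ->
  rho_c (pinv (colblk D (bsupp x0)) *m colblk D (~: bsupp x0)) < 1 ->
  LOPT_recovers D (D *m x0) x0 /\
  (forall (sel : nat -> 'I_M) (xs : nat -> 'cV[R[i]]_(M * d)),
     bomp_run D (D *m x0) sel xs k ->
     (forall l : nat, (l < k)%N ->
        sel l \in bsupp x0 /\ (forall j : nat, (j < l)%N -> sel j != sel l))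
     /\ xs k = x0).
Proof.
move=> _ spark _ cardS erc.
have S_le : (#|bsupp x0| <= 2 * k)%N by rewrite cardS leq_pmull.
have D0_inj := colblk_inj S_le spark.
split; first exact: lopt_recovers.
by rewrite -cardS => sel xs; exact: bomp_run_correct.
Qed.
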